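(* Let $\mathcal C$ be a covariantly finite subcategory of the category of all finitely presented right $R$-modules, and let $T$ be a module in $\varinjlim\mathcal C$. Assume that for every direct system $(C_n,c_{mn}\mid n\le m<\omega)$ of modules from $\mathcal C$ indexed by $\omega$, the inverse system $(\mathrm{Hom}_R(C_n,T),\mathrm{Hom}_R(c_{mn},T))_{n<\omega}$ is Mittag-Leffler. Then $T$ is $\Sigma$-pure-injective.
   Context: $\mathcal C$ covariantly finite in the category of finitely presented modules means every finitely presented module $F$ admits a map $p:F\to C$ with $C\in\mathcal C$ through which every map from $F$ to a module of $\mathcal C$ factors. $\varinjlim\mathcal C$ is the class of all direct limits of direct systems of modules from $\mathcal C$. An inverse system $(H_n,h_{nm})$ is Mittag-Leffler if for each $n$ there is $m\ge n$ with $\mathrm{Im}(h_{nk})=\mathrm{Im}(h_{nm})$ for all $k\ge m$. $T$ is $\Sigma$-pure-injective if every direct sum of copies of $T$ is pure-injective. *)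

(* Right R-modules are modelled as left modules over the
   converse ring R^c : for x in M and r in R, the right action x.r is r *: x. *)
From HB Require Import structures.
From mathcomp Require Import all_boot all_order all_algebra.
Set Implicit Arguments. Unset Strict Implicit. Unset Printing Implicit Defensive.
Import GRing.Theory.
Local Open Scope ring_scope.

Section ModuleTheory.
Variable R : nzRingType.

Notation rmod := (lmodType R^c).

Definition fin_presented (M : rmod) : Prop :=
  exists (m n : nat) (g : {linear 'rV[R^c]_m -> 'rV[R^c]_n})
         (p : {linear 'rV[R^c]_n -> M}),
    (forall y : M, exists v, p v = y) /\
    (forall v, p v = 0 <-> exists u, v = g u).

Definition direct_system (I : Type) (le : I -> I -> Prop)
  (M : I -> rmod) (f : forall i j, le i j -> {linear M i -> M j}) : Prop :=
  (forall i (h : le i i) x, f i i h x = x) /\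
  (forall i j k (h1 : le i j) (h2 : le j k) (h3 : le i k) x,
      f j k h2 (f i j h1 x) = f i k h3 x).

Definition directed (I : Type) (le : I -> I -> Prop) : Prop :=
  (exists i : I, True) /\
  (forall i, le i i) /\
  (forall i j k, le i j -> le j k -> le i k) /\
  (forall i j, exists k, le i k /\ le j k).

Definition is_direct_limit (I : Type) (le : I -> I -> Prop)
  (M : I -> rmod) (f : forall i j, le i j -> {linear M i -> M j})
  (L : rmod) (g : forall i, {linear M i -> L}) : Prop :=
  (forall i j (h : le i j) x, g j (f i j h x) = g i x) /\
  (forall (N : rmod) (q : forall i, {linear M i -> N}),
     (forall i j (h : le i j) x, q j (f i j h x) = q i x) ->
     (exists u : {linear L -> N}, forall i x, u (g i x) = q i x) /\
     (forall u v : {linear L -> N},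
        (forall i x, u (g i x) = q i x) -> (forall i x, v (g i x) = q i x) ->
        forall y, u y = v y)).

Definition in_varinjlim (C : rmod -> Prop) (T : rmod) : Prop :=
  exists (I : Type) (le : I -> I -> Prop) (M : I -> rmod)
         (f : forall i j, le i j -> {linear M i -> M j})
         (g : forall i, {linear M i -> T}),
    directed le /\ (forall i, C (M i)) /\ direct_system f /\ is_direct_limit f g.

Definition cov_finite_in_fp (C : rmod -> Prop) : Prop :=
  (forall M, C M -> fin_presented M) /\
  (forall F : rmod, fin_presented F ->
     exists (C0 : rmod) (p : {linear F -> C0}), C C0 /\
       forall (C1 : rmod) (k : {linear F -> C1}), C C1 ->
         exists t : {linear C0 -> C1}, forall x, t (p x) = k x).

(* The inverse system (Hom(C_n,T), Hom(c_mn,T)) is Mittag-Leffler: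
   for each n there is m >= n with Im h_nk = Im h_nm for all k >= m,
   where h_nk : Hom(C_k,T) -> Hom(C_n,T), phi |-> phi o c_nk. *)
Definition hom_ML (Cs : nat -> rmod)
  (c : forall n m, (n <= m)%N -> {linear Cs n -> Cs m}) (T : rmod) : Prop :=
  forall n, exists m (hnm : (n <= m)%N), forall k (hnk : (n <= k)%N), (m <= k)%N ->
    forall psi : {linear Cs n -> T},
      (exists phi : {linear Cs k -> T}, forall x, psi x = phi (c n k hnk x)) <->
      (exists phi : {linear Cs m -> T}, forall x, psi x = phi (c n m hnm x)).

Definition pure_mono (A B : rmod) (f : {linear A -> B}) : Prop :=
  injective f /\
  forall (n m : nat) (r : 'I_n -> 'I_m -> R^c) (a : 'I_m -> A),
    (exists x : 'I_n -> B, forall i, \sum_(j < n) r j i *: x j = f (a i)) ->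
    exists y : 'I_n -> A, forall i, \sum_(j < n) r j i *: y j = a i.

Definition pure_injective (M : rmod) : Prop :=
  forall (A B : rmod) (f : {linear A -> B}), pure_mono f ->
    forall g : {linear A -> M}, exists h : {linear B -> M}, forall a, h (f a) = g a.

Definition is_direct_sum_of_copies (T M : rmod) : Prop :=
  exists (I : Type) (iota : I -> {linear T -> M}),
    forall (N : rmod) (q : I -> {linear T -> N}),
      (exists u : {linear M -> N}, forall i x, u (iota i x) = q i x) /\
      (forall u v : {linear M -> N},
         (forall i x, u (iota i x) = v (iota i x)) -> forall y, u y = v y).

Definition sigma_pure_injective (T : rmod) : Prop :=
  forall M : rmod, is_direct_sum_of_copies T M -> pure_injective M.

End ModuleTheory.

(* The argument runs through the descending chain condition on pp-definable
   subgroups.  A module with this condition is algebraically compact: by the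
   minimal condition, a finitely solvable system of equations has, at each
   unknown, a value compatible with every finite subsystem, and Zorn's lemma
   assembles these values into a solution.  Hence it is pure-injective, and the
   condition passes to direct sums of copies since pp-formulas are evaluated
   coordinatewise.
   For T in lim C, a descending chain of pp-formulas has free realizations
   (F_n, u_n) with maps F_n -> F_(n+1) sending u_n to u_(n+1); C-preenvelopes
   F_n -> C_n turn them into a direct system of modules of C with compatible
   elements e_n.  As T is a direct limit of modules of C, t satisfies the n-th
   formula iff t = h (e_n) for some h : C_n -> T, so the Mittag-Leffler
   condition at stage 0 makes the chain of pp-subgroups of T stabilise. *)

From HB Require Import structures.
From mathcomp Require Import all_boot all_algebra.
From mathcomp Require Import boolp generic_quotient.
From mathcomp Require classical_sets.
Set Implicit Arguments. Unset Strict Implicit. Unset Printing Implicit Defensive.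
Import GRing.Theory.
Local Open Scope ring_scope.

Definition linear_of (K : pzRingType) (U W : lmodType K) (h : U -> W)
    (hl : linear h) : {linear U -> W} :=
  HB.pack h (GRing.isLinear.Build K U W _ h hl).

Definition is_submod (K : pzRingType) (V : lmodType K) (S : V -> Prop) :=
  [/\ S 0, forall x y, S x -> S y -> S (x - y) & forall a x, S x -> S (a *: x)].

Section Quotmod.
Local Open Scope quotient_scope.
Variables (K : pzRingType) (V : lmodType K) (S : V -> Prop).
Hypothesis S_submod : is_submod S.

Let S0 : S 0. Proof. by case: S_submod. Qed.
Let SB x y : S x -> S y -> S (x - y). Proof. by case: S_submod => _ + _; apply. Qed.
Let SZ a x : S x -> S (a *: x). Proof. by case: S_submod => _ _; apply. Qed.
Let SN x : S x -> S (- x). Proof. by move=> Sx; rewrite -sub0r; apply: SB. Qed.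
Let SD x y : S x -> S y -> S (x + y).
Proof. by move=> Sx Sy; rewrite -[y]opprK; apply/SB/SN. Qed.

Definition quotmod_equiv (x y : V) := `[< S (x - y) >].

Lemma quotmod_equiv_is_equiv : equiv_class_of quotmod_equiv.
Proof.
split=> [x|x y|y x z]; rewrite /quotmod_equiv.
- by apply/asboolP; rewrite subrr; apply: S0.
- by apply/asboolP/asboolP => /SN; rewrite opprB.
- move=> /asboolP Sxy /asboolP Syz; apply/asboolP.
  by rewrite -[x](subrK y) -addrA; apply: SD.
Qed.

Canonical quotmod_equiv_equiv := EquivRelPack quotmod_equiv_is_equiv.
Canonical quotmod_equiv_encModRel := defaultEncModRel quotmod_equiv.

Definition quotmod := {eq_quot quotmod_equiv}.
HB.instance Definition _ : EqQuotient V quotmod_equiv quotmod := EqQuotient.on quotmod.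
HB.instance Definition _ := Choice.on quotmod.

Lemma quotmod_eqmodE x y : (x == y %[mod quotmod]) = `[< S (x - y) >].
Proof. by rewrite piE. Qed.

Lemma quotmod_pi_eq x y : S (x - y) -> \pi_quotmod x = \pi_quotmod y.
Proof. by move=> Sxy; apply/eqP; rewrite quotmod_eqmodE; apply/asboolP. Qed.

Lemma quotmod_repr_pi x : S (x - repr (\pi_quotmod x)).
Proof. by rewrite -opprB; apply/SN/asboolP; rewrite -quotmod_eqmodE reprK. Qed.

Definition quotmod_zero : quotmod := \pi_quotmod 0.
Definition quotmod_add := locked (fun a b : quotmod => \pi_quotmod (repr a + repr b)).
Definition quotmod_opp := locked (fun a : quotmod => \pi_quotmod (- repr a)).
Definition quotmod_scale := locked (fun k (a : quotmod) => \pi_quotmod (k *: repr a)).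

Lemma quotmod_pi_add x y : \pi_quotmod (x + y) = quotmod_add (\pi x) (\pi y).
Proof.
unlock quotmod_add; apply: quotmod_pi_eq; rewrite opprD addrACA.
by apply/SD/quotmod_repr_pi/quotmod_repr_pi.
Qed.

Lemma quotmod_pi_opp x : \pi_quotmod (- x) = quotmod_opp (\pi x).
Proof.
by unlock quotmod_opp; apply: quotmod_pi_eq; rewrite -opprD; apply/SN/quotmod_repr_pi.
Qed.

Lemma quotmod_pi_scale k x : \pi_quotmod (k *: x) = quotmod_scale k (\pi x).
Proof.
by unlock quotmod_scale; apply: quotmod_pi_eq; rewrite -scalerBr; apply/SZ/quotmod_repr_pi.
Qed.

Lemma quotmod_addA : associative quotmod_add.
Proof.
move=> x y z; elim/quotW: x => x; elim/quotW: y => y; elim/quotW: z => z.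
by rewrite -!quotmod_pi_add addrA.
Qed.

Lemma quotmod_addC : commutative quotmod_add.
Proof.
by move=> x y; elim/quotW: x => x; elim/quotW: y => y; rewrite -!quotmod_pi_add addrC.
Qed.

Lemma quotmod_add0 : left_id quotmod_zero quotmod_add.
Proof. by move=> x; elim/quotW: x => x; rewrite -quotmod_pi_add add0r. Qed.

Lemma quotmod_addN : left_inverse quotmod_zero quotmod_opp quotmod_add.
Proof. by move=> x; elim/quotW: x => x; rewrite -quotmod_pi_opp -quotmod_pi_add addNr. Qed.

HB.instance Definition _ :=
  GRing.isZmodule.Build quotmod quotmod_addA quotmod_addC quotmod_add0 quotmod_addN.

Lemma quotmod_scaleA a b v : quotmod_scale a (quotmod_scale b v) = quotmod_scale (a * b) v.
Proof. by elim/quotW: v => v; rewrite -!quotmod_pi_scale scalerA. Qed.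

Lemma quotmod_scale1 : left_id 1 quotmod_scale.
Proof. by move=> v; elim/quotW: v => v; rewrite -quotmod_pi_scale scale1r. Qed.

Lemma quotmod_scaleDr : right_distributive quotmod_scale quotmod_add.
Proof.
move=> a u v; elim/quotW: u => u; elim/quotW: v => v.
by rewrite -!(quotmod_pi_scale, quotmod_pi_add) scalerDr.
Qed.

Lemma quotmod_scaleDl v : {morph quotmod_scale^~ v : a b / a + b >-> quotmod_add a b}.
Proof.
by move=> a b; elim/quotW: v => v; rewrite -!(quotmod_pi_scale, quotmod_pi_add) scalerDl.
Qed.

HB.instance Definition _ := GRing.Zmodule_isLmodule.Build K quotmod
  quotmod_scaleA quotmod_scale1 quotmod_scaleDr quotmod_scaleDl.

Definition quotmod_proj (x : V) : quotmod := \pi_quotmod x.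

Lemma quotmod_proj_is_linear : linear quotmod_proj.
Proof. by move=> a x y; rewrite /quotmod_proj quotmod_pi_add quotmod_pi_scale. Qed.
HB.instance Definition _ :=
  GRing.isLinear.Build K V quotmod _ quotmod_proj quotmod_proj_is_linear.

Lemma quotmod_proj_eq0 x : quotmod_proj x = 0 <-> S x.
Proof.
split=> [px0|Sx]; last by apply: quotmod_pi_eq; rewrite subr0.
have : x == 0 %[mod quotmod] by rewrite /quotmod_proj in px0; rewrite px0.
by rewrite quotmod_eqmodE subr0 => /asboolP.
Qed.

Lemma quotmod_proj_surj (q : quotmod) : exists x, quotmod_proj x = q.
Proof. by exists (repr q); rewrite /quotmod_proj reprK. Qed.

Lemma quotmod_proj_lift (W : lmodType K) (h : {linear V -> W}) :
  (forall x, S x -> h x = 0) ->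
  exists h' : {linear quotmod -> W}, forall x, h' (quotmod_proj x) = h x.
Proof.
move=> hS; pose f (q : quotmod) := h (repr q).
have fE x : f (quotmod_proj x) = h x.
  by apply/eqP; rewrite -subr_eq0 -linearB hS // -opprB; apply/SN/quotmod_repr_pi.
have f_lin : linear f.
  move=> a u v; have [x <-] := quotmod_proj_surj u; have [y <-] := quotmod_proj_surj v.
  by rewrite -linearP !fE linearP.
by exists (linear_of f_lin).
Qed.

End Quotmod.

Section LinearCombination.
Variables (K : pzRingType) (X : Type).
Implicit Types V W : lmodType K.

Definition lincomb V (s : X -> V) (e : seq (X * K)) : V := \sum_(p <- e) p.2 *: s p.1.

Lemma lincomb_cons V (s : X -> V) p e : lincomb s (p :: e) = p.2 *: s p.1 + lincomb s e.
Proof. by rewrite /lincomb big_cons. Qed.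

Lemma lincomb1 V (s : X -> V) y : lincomb s [:: (y, 1)] = s y.
Proof. by rewrite /lincomb big_seq1 scale1r. Qed.

Lemma linear_lincomb V W (h : {linear V -> W}) (s : X -> V) e :
  h (lincomb s e) = lincomb (h \o s) e.
Proof. by rewrite /lincomb linear_sum; apply: eq_bigr => p _; rewrite linearZ. Qed.

Lemma lincombD V (s1 s2 : X -> V) e : lincomb (s1 \+ s2) e = lincomb s1 e + lincomb s2 e.
Proof. by rewrite /lincomb -big_split; apply: eq_bigr => p _; rewrite scalerDr. Qed.

Lemma lincombB V (s1 s2 : X -> V) e : lincomb (s1 \- s2) e = lincomb s1 e - lincomb s2 e.
Proof. by rewrite /lincomb -sumrB; apply: eq_bigr => p _; rewrite scalerBr. Qed.

Lemma lincomb0 V (e : seq (X * K)) : lincomb (fun=> 0 : V) e = 0.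
Proof. by rewrite /lincomb big1 // => p _; rewrite scaler0. Qed.

End LinearCombination.

Definition rename (K : pzRingType) (X Y : Type) (f : Y -> X) (e : seq (Y * K)) :=
  [seq (f p.1, p.2) | p <- e].

Lemma lincomb_rename (K : pzRingType) (X Y : Type) (V : lmodType K) (f : Y -> X)
    (s : X -> V) (e : seq (Y * K)) :
  lincomb s (rename f e) = lincomb (s \o f) e.
Proof. by rewrite /lincomb big_map. Qed.

Lemma eq_lincomb (K : pzRingType) (X : eqType) (V : lmodType K) (s s' : X -> V) e :
  {in e, forall p, s p.1 = s' p.1} -> lincomb s e = lincomb s' e.
Proof. by move=> ss'; apply: eq_big_seq => p /ss' ->. Qed.

(* A pp-formula phi(x_0) is a list of equations in the variables x_0, x_1, ...:
   the equation e stands for lincomb x e = 0, and all variables but x_0 are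
   existentially quantified. *)
Notation ppformula K := (seq (seq (nat * K))).

Section PPFormulas.
Variable K : pzRingType.
Implicit Types (V W : lmodType K) (phi psi : ppformula K).

Definition pp_sat V phi (m : V) :=
  exists s : nat -> V, s 0%N = m /\ {in phi, forall e, lincomb s e = 0}.

Definition pp_nvars phi := (\max_(e <- phi) \max_(p <- e) p.1).+1.

Lemma pp_nvarsP phi e p : e \in phi -> p \in e -> (p.1 < pp_nvars phi)%N.
Proof.
move=> ephi pe; rewrite ltnS; apply: leq_trans (leq_bigmax_seq _ ephi _) => //.
exact: (leq_bigmax_seq _ pe).
Qed.

(* equivalent to the usual chain condition: pass to the subchain of strict inclusions *)
Definition pp_dcc V := forall D : nat -> ppformula K,
  (forall n (m : V), pp_sat (D n.+1) m -> pp_sat (D n) m) ->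
  exists n, forall m : V, pp_sat (D n) m -> pp_sat (D n.+1) m.

Lemma pp_sat_linear V W (h : {linear V -> W}) phi m : pp_sat phi m -> pp_sat phi (h m).
Proof.
case=> s [<- sphi]; exists (h \o s); split=> // e /sphi.
by rewrite -linear_lincomb => ->; rewrite linear0.
Qed.

Lemma pp_sat0 V phi : pp_sat phi (0 : V).
Proof. by exists (fun=> 0); split=> // e _; apply: lincomb0. Qed.

Lemma pp_satD V phi (m1 m2 : V) : pp_sat phi m1 -> pp_sat phi m2 -> pp_sat phi (m1 + m2).
Proof.
case=> s1 [<- s1phi] [s2 [<- s2phi]]; exists (s1 \+ s2); split=> // e ephi.
by rewrite lincombD s1phi ?s2phi ?addr0.
Qed.

Lemma pp_sat_sum V phi (I : Type) (r : seq I) (F : I -> V) :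
  (forall i, pp_sat phi (F i)) -> pp_sat phi (\sum_(i <- r) F i).
Proof.
move=> Fphi; elim: r => [|i r IH]; first by rewrite big_nil; apply: pp_sat0.
by rewrite big_cons; apply: pp_satD.
Qed.

(* phi on the even variables, psi on the odd ones, and x_0 = x_1 *)
Definition pp_and phi psi : ppformula K :=
  [seq rename double e | e <- phi] ++ [seq rename (fun v => v.*2.+1) e | e <- psi] ++
  [:: [:: (0%N, 1); (1%N, -1)]].

Lemma pp_andP V phi psi (m : V) :
  pp_sat (pp_and phi psi) m <-> pp_sat phi m /\ pp_sat psi m.
Proof.
have lincomb01 (s : nat -> V) : lincomb s [:: (0%N, 1); (1%N, -1)] = s 0%N - s 1%N.
  by rewrite !lincomb_cons /lincomb big_nil scale1r scaleN1r addr0.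
split.
- case=> s [<- s_sol].
  have /eqP : lincomb s [:: (0%N, 1); (1%N, -1)] = 0.
    by apply: s_sol; rewrite !mem_cat mem_seq1 eqxx !orbT.
  rewrite lincomb01 subr_eq0 => /eqP s01.
  split; [exists (s \o double) | exists (s \o (fun v => v.*2.+1))]; split=> //= e ephi;
    by rewrite -lincomb_rename; apply: s_sol; rewrite !mem_cat map_f ?orbT.
- case=> -[s1 [<- s1_sol]] [s2 [s20 s2_sol]].
  exists (fun v => if odd v then s2 v./2 else s1 v./2); split=> // e.
  rewrite !mem_cat => /or3P[/mapP[e' e'phi ->]|/mapP[e' e'psi ->]|].
  + rewrite lincomb_rename -(s1_sol _ e'phi); apply: eq_lincomb => p _.
    by rewrite /= odd_double doubleK.
  + rewrite lincomb_rename -(s2_sol _ e'psi); apply: eq_lincomb => p _.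
    by rewrite /= odd_double uphalf_double.
  + by rewrite mem_seq1 => /eqP ->; rewrite lincomb01 /= s20 subrr.
Qed.

Lemma pp_dcc_minimal V (F : ppformula K -> Prop) phi0 :
  pp_dcc V -> F phi0 ->
  (forall phi psi, F phi -> F psi -> exists2 chi, F chi &
     forall m : V, pp_sat chi m -> pp_sat phi m /\ pp_sat psi m) ->
  exists2 phi, F phi & forall psi, F psi -> forall m : V, pp_sat phi m -> pp_sat psi m.
Proof.
move=> dcc Fphi0 Fdown; apply: contrapT => nomin.
have /choice[next nextP] : forall phi, exists chi, F phi ->
    [/\ F chi, forall m : V, pp_sat chi m -> pp_sat phi m
      & exists m : V, pp_sat phi m /\ ~ pp_sat chi m].
  move=> phi; have [Fphi|] := pselect (F phi); last by exists phi.
  apply: contrapT => nochi; apply: nomin; exists phi => // psi Fpsi m phim.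
  apply: contrapT => npsi; have [chi Fchi chi_sub] := Fdown _ _ Fphi Fpsi.
  apply: nochi; exists chi => _; split=> // [m' /chi_sub[]//|].
  by exists m; split=> // /chi_sub[_ /npsi].
pose D n := iter n next phi0.
have FD n : F (D n) by elim: n => //= n /nextP[].
have D_desc n (m : V) : pp_sat (D n.+1) m -> pp_sat (D n) m.
  by case: (nextP _ (FD n)) => _ + _; apply.
have [n Dn_sub] := dcc D D_desc.
by have [_ _ [m [Dnm]]] := nextP _ (FD n); apply; apply: Dn_sub.
Qed.

End PPFormulas.

Section Compactness.
Variables (K : pzRingType) (V : lmodType K) (X : eqType).

Definition hom_sat (l : seq (seq (X * K))) (x : X) (m : V) :=
  exists s : X -> V, s x = m /\ {in l, forall e, lincomb s e = 0}.

Lemma hom_sat_sub l l' x m : {subset l <= l'} -> hom_sat l' x m -> hom_sat l x m.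
Proof. by move=> ll' [s [sx sl']]; exists s; split=> // e /ll' /sl'. Qed.

(* the variables of l, numbered from 0 starting with x *)
Definition pp_of_hom (x : X) (l : seq (seq (X * K))) : ppformula K :=
  [seq rename (index^~ (x :: flatten [seq map fst e | e <- l])) e | e <- l].

Lemma pp_of_homP l x m : hom_sat l x m <-> pp_sat (pp_of_hom x l) m.
Proof.
rewrite /pp_of_hom; set vars := (x :: _); split.
- case=> s [<- sl]; exists (fun k => s (nth x vars k)); split=> // _ /mapP[e el ->].
  rewrite lincomb_rename -(sl _ el); apply: eq_lincomb => p pe /=.
  rewrite nth_index // in_cons; apply/orP; right.
  by apply/flattenP; exists (map fst e); [apply: map_f | apply: map_f].
- case=> s [s0 sl]; exists (fun y => s (index y vars)); split=> [|e el].
    by rewrite /= eqxx.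
  by rewrite -lincomb_rename; apply/sl/map_f.
Qed.

Definition equation := (seq (X * K) * V)%type.
Definition solves (s : X -> V) (e : equation) := lincomb s e.1 = e.2.
Definition finitely_solvable (Sys : equation -> Prop) :=
  forall l : seq equation, {in l, forall e, Sys e} -> exists s, {in l, forall e, solves s e}.

Lemma pp_dcc_solution_value (Sys : equation -> Prop) x :
  pp_dcc V -> finitely_solvable Sys ->
  exists v, forall l : seq equation, {in l, forall e, Sys e} ->
    exists2 s, {in l, forall e, solves s e} & s x = v.
Proof.
move=> dcc Sys_fs.
pose F phi := exists2 l, {in l, forall e, Sys e} & phi = pp_of_hom x (map fst l).
have F0 : F (pp_of_hom x [::]) by exists [::].
have Fdown phi psi : F phi -> F psi -> exists2 chi, F chi &
    forall m : V, pp_sat chi m -> pp_sat phi m /\ pp_sat psi m.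
  move=> [l1 l1Sys ->] [l2 l2Sys ->]; exists (pp_of_hom x (map fst (l1 ++ l2))).
    by exists (l1 ++ l2) => // e; rewrite mem_cat => /orP[/l1Sys|/l2Sys].
  by move=> m /pp_of_homP l12m; split; apply/pp_of_homP/(hom_sat_sub _ l12m) => e;
    rewrite map_cat mem_cat => ->; rewrite ?orbT.
have [_ [l0 l0Sys ->] l0_min] := pp_dcc_minimal dcc F0 Fdown.
have [s0 s0l0] := Sys_fs _ l0Sys; exists (s0 x) => l lSys.
have l0lSys : {in l0 ++ l, forall e, Sys e}.
  by move=> e; rewrite mem_cat => /orP[/l0Sys|/lSys].
have [s1 s1l0l] := Sys_fs _ l0lSys.
(* s0 - s1 solves the homogeneous part of l0, hence, by minimality, that of l0 ++ l *)
have : hom_sat (map fst l0) x (s0 x - s1 x).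
  exists (s0 \- s1); split=> // _ /mapP[e el0 ->].
  by rewrite lincombB s0l0 // s1l0l ?subrr // mem_cat el0.
have Fl0l : F (pp_of_hom x (map fst (l0 ++ l))) by exists (l0 ++ l).
move=> /pp_of_homP/(l0_min _ Fl0l)/pp_of_homP[d [dx dl0l]].
exists (s1 \+ d) => [e el|]; last by rewrite /= dx addrC subrK.
rewrite /solves lincombD s1l0l ?mem_cat ?el ?orbT // dl0l ?addr0 //.
by apply: map_f; rewrite mem_cat el orbT.
Qed.

Definition with_values (Sys : equation -> Prop) (A : X * V -> Prop) (e : equation) :=
  Sys e \/ exists2 y, A y & e = ([:: (y.1, 1)], y.2).

Definition consistent_values (Sys : equation -> Prop) (A : X * V -> Prop) :=
  (forall x v v', A (x, v) -> A (x, v') -> v = v') /\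
  finitely_solvable (with_values Sys A).

Lemma solves_value s x v : solves s ([:: (x, 1)], v) <-> s x = v.
Proof. by rewrite /solves lincomb1. Qed.

Lemma with_values_sub Sys (A B : X * V -> Prop) e :
  (forall y, A y -> B y) -> with_values Sys A e -> with_values Sys B e.
Proof. by move=> AB [Se|[y /AB By ->]]; [left|right; exists y]. Qed.

Lemma consistent_values_bigcup Sys (F : (X * V -> Prop) -> Prop) :
  finitely_solvable Sys -> (forall A, F A -> consistent_values Sys A) ->
  (forall A B, F A -> F B -> (forall y, A y -> B y) \/ (forall y, B y -> A y)) ->
  consistent_values Sys (fun y => exists2 A, F A & A y).
Proof.
move=> Sys_fs Fcons Ftot; split.
  move=> x v v' [A FA Axv] [B FB Bxv'].
  by have [AB|BA] := Ftot _ _ FA FB; [apply: (proj1 (Fcons _ FB)) (AB _ Axv) Bxv'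
    | apply: (proj1 (Fcons _ FA)) Axv (BA _ Bxv')].
move=> l l_vals; suff [lSys|[A FA lA]] : {in l, forall e, Sys e} \/
    exists2 A, F A & {in l, forall e, with_values Sys A e}.
- exact: Sys_fs lSys.
- exact: (proj2 (Fcons _ FA)) _ lA.
elim: l l_vals => [|e l IH] el_vals; first by left.
have [lSys|[A FA lA]] := IH (fun e' e'l => el_vals e' (predU1r _ _ e'l)).
- have [Se|[y [B FB By] ->]] := el_vals e (mem_head _ _).
    by left => e'; rewrite in_cons => /orP[/eqP->|/lSys].
  right; exists B => // e'; rewrite in_cons => /orP[/eqP->|/lSys]; last by left.
  by right; exists y.
- right; have [Se|[y [B FB By] ->]] := el_vals e (mem_head _ _).
    by exists A => // e'; rewrite in_cons => /orP[/eqP->|/lA]; first by left.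
  have [AB|BA] := Ftot _ _ FA FB.
  + exists B => // e'; rewrite in_cons => /orP[/eqP->|/lA]; first by right; exists y.
    exact: with_values_sub.
  + exists A => // e'; rewrite in_cons => /orP[/eqP->|/lA] //.
    by right; exists y => //; apply: BA.
Qed.

Lemma consistent_values_extend Sys A x :
  pp_dcc V -> consistent_values Sys A -> (forall v, ~ A (x, v)) ->
  exists v, consistent_values Sys (fun y => A y \/ y = (x, v)).
Proof.
move=> dcc [Afun A_fs] Ax; have [v vP] := pp_dcc_solution_value x dcc A_fs.
exists v; split.
  move=> y w w' [Ayw|[Ey Ew]] [Ayw'|[Ey' Ew']]; subst => //.
  - exact: Afun Ayw Ayw'.
  - by case: (Ax w Ayw).
  - by case: (Ax w' Ayw').
move=> l l_vals; pose l' := [seq e <- l | `[< with_values Sys A e >]].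
have [|s sl' sx] := vP l'; first by move=> e; rewrite mem_filter => /andP[/asboolP].
exists s => e el; have [eA|neA] := pselect (with_values Sys A e).
  by apply: sl'; rewrite mem_filter el andbT; apply/asboolP.
case: (l_vals e el) => [Se|[y [Ay eE|yE eE]]].
- by case: neA; left.
- by case: neA; right; exists y.
- by rewrite eE yE; apply/solves_value.
Qed.

Theorem pp_dcc_algebraically_compact (Sys : equation -> Prop) :
  pp_dcc V -> finitely_solvable Sys -> exists s : X -> V, forall e, Sys e -> solves s e.
Proof.
move=> dcc Sys_fs.
have [|A [[Afun A_fs] Amax]] := @classical_sets.Zorn_bigcup (X * V) (consistent_values Sys).
  by move=> F FP Ftot; apply: consistent_values_bigcup.
have /choice[s sA] : forall x, exists v, A (x, v).
  move=> x; apply: contrapT => /forallNP Ax.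
  have [v Bcons] := consistent_values_extend dcc (conj Afun A_fs) Ax.
  apply: (Amax _ _ Bcons); split=> [y Ay|AB]; first by left.
  by apply: (Ax v); apply: AB; right.
exists s => e Se.
pose vals : seq equation := [seq ([:: (p.1, 1)], s p.1) | p <- e.1].
have [|s' s'_sol] := A_fs (e :: vals).
  move=> e'; rewrite in_cons => /orP[/eqP->|/mapP[p _ ->]]; first by left.
  by right; exists (p.1, s p.1).
rewrite /solves -(s'_sol e (mem_head _ _)); apply: eq_lincomb => p pe.
by apply/esym/solves_value/s'_sol; rewrite in_cons map_f ?orbT.
Qed.

End Compactness.

Section Coordinates.
Variables (K : pzRingType) (X : eqType).

Definition coef (vars : seq X) (e : seq (X * K)) (j : nat) : K :=
  \sum_(p <- e | index p.1 vars == j) p.2.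

Lemma lincomb_coef (W : lmodType K) (vars : seq X) e (w : nat -> W) :
  {in e, forall p, p.1 \in vars} ->
  lincomb (fun x => w (index x vars)) e = \sum_(j < size vars) coef vars e j *: w j.
Proof.
elim: e => [|p e IH] e_vars.
  by rewrite /lincomb big_nil big1 // => j _; rewrite /coef big_nil scale0r.
rewrite lincomb_cons IH => [|q qe]; last by apply: e_vars; rewrite in_cons qe orbT.
have p_vars : (index p.1 vars < size vars)%N by rewrite index_mem e_vars ?mem_head.
have coef_cons (j : 'I_(size vars)) : coef vars (p :: e) j *: w j =
    (if index p.1 vars == j then p.2 *: w j else 0) + coef vars e j *: w j.
  by rewrite /coef big_cons; case: eqP; rewrite ?scalerDl ?add0r.
rewrite [in RHS](eq_bigr _ (fun j _ => coef_cons j)) big_split /=; congr (_ + _).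
rewrite (bigD1 (Ordinal p_vars)) //= eqxx big1 ?addr0 // => j /negbTE.
by rewrite -(inj_eq val_inj) /= eq_sym => ->.
Qed.

End Coordinates.

Section PureInjective.
Variable R : nzRingType.

Definition pure_system (A B M : lmodType R^c) (f : {linear A -> B}) (g : {linear A -> M})
    (e : equation M B) :=
  exists a, e.2 = g a /\ lincomb id e.1 = f a.

Lemma pure_system_finitely_solvable (A B M : lmodType R^c) (f : {linear A -> B})
    (g : {linear A -> M}) :
  pure_mono f -> finitely_solvable (pure_system f g).
Proof.
case=> _ f_pure l lSys; pose e0 : equation M B := ([::], 0).
pose vars := flatten [seq map fst e.1 | e <- l].
have /choice[a aP] (i : 'I_(size l)) : exists a, (nth e0 l i).2 = g a /\
    lincomb id (nth e0 l i).1 = f a by apply/lSys/mem_nth.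
have e_vars (i : 'I_(size l)) : {in (nth e0 l i).1, forall p, p.1 \in vars}.
  move=> p pe; apply/flattenP; exists (map fst (nth e0 l i).1); last exact: map_f.
  by apply: map_f; apply: mem_nth.
have [y yP] : exists y : 'I_(size vars) -> A,
    forall i : 'I_(size l), \sum_(j < size vars) coef vars (nth e0 l i).1 j *: y j = a i.
  apply: f_pure; exists (fun j => nth 0 vars j) => i.
  rewrite -(proj2 (aP i)) -(lincomb_coef (fun j => nth 0 vars j) (e_vars i)).
  by apply: eq_lincomb => p /e_vars /= p_vars; rewrite nth_index.
pose y' k := oapp y 0 (insub k).
exists (fun b => g (y' (index b vars))) => _ /(nthP e0)[i il <-].
rewrite /solves (lincomb_coef (fun k => g (y' k)) (e_vars (Ordinal il))).
rewrite (proj1 (aP (Ordinal il))) -(yP (Ordinal il)) linear_sum.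
by apply: eq_bigr => j _; rewrite linearZ /y' valK.
Qed.

Theorem pp_dcc_pure_injective (M : lmodType R^c) : pp_dcc M -> pure_injective M.
Proof.
move=> dcc A B f f_pure g.
have [s sP] := pp_dcc_algebraically_compact dcc
  (pure_system_finitely_solvable (g := g) f_pure).
have s_lin : linear s.
  move=> a u v; pose rel := [:: (a *: u + v, 1); (u, - a); (v, -1)].
  have lincomb_rel (W : lmodType R^c) (h : B -> W) :
      lincomb h rel = h (a *: u + v) - (a *: h u + h v).
    by rewrite !lincomb_cons /lincomb big_nil /= scale1r scaleNr scaleN1r addr0 opprD.
  have /sP : pure_system f g (rel, 0) by exists 0; rewrite !linear0 lincomb_rel subrr.
  by rewrite /solves lincomb_rel => /eqP; rewrite subr_eq0 => /eqP.
exists (linear_of s_lin) => a; apply/solves_value/sP.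
by exists a; rewrite lincomb1.
Qed.

End PureInjective.

Section DirectSumOfCopies.
Variables (R : nzRingType) (T M : lmodType R^c) (I : Type) (iota : I -> {linear T -> M}).
Hypothesis iota_coprod : forall (N : lmodType R^c) (q : I -> {linear T -> N}),
  (exists u : {linear M -> N}, forall i x, u (iota i x) = q i x) /\
  (forall u v : {linear M -> N},
     (forall i x, u (iota i x) = v (iota i x)) -> forall y, u y = v y).

Lemma coprod_proj_exists :
  exists pi : I -> {linear M -> T}, forall i j x, pi i (iota j x) = if `[< j = i >] then x else 0.
Proof.
suff /choice[pi piE] : forall i, exists p : {linear M -> T},
    forall j x, p (iota j x) = if `[< j = i >] then x else 0 by exists pi.
move=> i; have q_lin j : linear (fun x : T => if `[< j = i >] then x else 0).
  by move=> a x y; case: ifP; rewrite ?scaler0 ?addr0.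
by have [[u uE] _] := iota_coprod (fun j => linear_of (q_lin j)); exists u.
Qed.

Variable pi : I -> {linear M -> T}.
Hypothesis piE : forall i j x, pi i (iota j x) = if `[< j = i >] then x else 0.

Lemma coprod_finite_support (m : M) :
  exists l : seq {classic I}, m = \sum_(i <- l) iota i (pi i m).
Proof.
pose S m := exists l : seq {classic I}, forall l', uniq l' -> {subset l <= l'} ->
  m = \sum_(i <- l') iota i (pi i m).
have S_submod : is_submod S.
  split.
  - by exists [::] => l' _ _; rewrite big1 // => i _; rewrite !linear0.
  - move=> x y [l1 l1x] [l2 l2y]; exists (l1 ++ l2) => l' ul' l12l'.
    under eq_bigr => i _ do rewrite !linearB.
    have l1l' : {subset l1 <= l'} by move=> i il1; apply: l12l'; rewrite mem_cat il1.
    have l2l' : {subset l2 <= l'} by move=> i il2; apply: l12l'; rewrite mem_cat il2 orbT.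
    by rewrite sumrB -l1x -?l2y.
  - move=> a x [l lx]; exists l => l' ul' ll'.
    under eq_bigr => i _ do rewrite !linearZ.
    by rewrite -scaler_sumr -lx.
have S_iota (j : {classic I}) x : S (iota j x).
  exists [:: j] => l' ul' /(_ j (mem_head _ _)) jl'.
  rewrite (bigD1_seq j) //= piE asboolT // big1_seq ?addr0 // => i /andP[ij _].
  by rewrite piE asboolF ?linear0 // => ji; rewrite ji eqxx in ij.
have [_ proj_uniq] := iota_coprod (fun=> \0 : {linear T -> quotmod S_submod}).
have /quotmod_proj_eq0[l lm] : quotmod_proj S_submod m = 0.
  by apply: (proj_uniq _ \0) => i x; apply/quotmod_proj_eq0.
by exists (undup l); apply: lm; [apply: undup_uniq | move=> i; rewrite mem_undup].
Qed.

End DirectSumOfCopies.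

Theorem pp_dcc_direct_sum (R : nzRingType) (T M : lmodType R^c) :
  is_direct_sum_of_copies T M -> pp_dcc T -> pp_dcc M.
Proof.
case=> I [iota iota_coprod] dccT D D_desc.
have [pi piE] := coprod_proj_exists iota_coprod.
have M_sum m := coprod_finite_support iota_coprod piE m.
have [[i0 _]|noI] := pselect (exists i : I, True); last first.
  exists 0%N => m _; have [l ->] := M_sum m.
  by apply: pp_sat_sum => i; case: noI; exists i.
have D_descT n (t : T) : pp_sat (D n.+1) t -> pp_sat (D n) t.
  by move=> /(pp_sat_linear (iota i0))/D_desc/(pp_sat_linear (pi i0)); rewrite piE asboolT.
have [n DnT] := dccT D D_descT.
exists n => m Dnm; have [l ->] := M_sum m.
by apply: pp_sat_sum => i; apply/pp_sat_linear/DnT/pp_sat_linear.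
Qed.

Lemma sum_delta_scale (K : pzRingType) (M : lmodType K) n (s : nat -> M) (j0 : 'I_n) :
  \sum_(j < n) (delta_mx 0 j0 : 'rV_n) 0 j *: s j = s j0.
Proof.
rewrite (bigD1 j0) //= big1 => [|j jj0]; first by rewrite mxE !eqxx scale1r addr0.
by rewrite mxE (negbTE jj0) andbF scale0r.
Qed.

Section FreeRealization.
Variables (R : nzRingType) (phi : ppformula R^c).

Local Notation n := (pp_nvars phi).
Local Notation vars := (iota 0 n).

Let index_vars x : (x < n)%N -> index x vars = x.
Proof.
by move=> xn; rewrite -[x in index x _](nth_iota 0 0 xn) index_uniq ?size_iota ?iota_uniq.
Qed.

Let phi_vars i : {in nth [::] phi i, forall p, p.1 \in vars}.
Proof.
have [iphi p pe|/(nth_default [::])-> //] := ltnP i (size phi).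
by rewrite mem_iota add0n; apply/pp_nvarsP/pe/mem_nth.
Qed.

Definition pp_relations : 'M[R^c]_(size phi, n) := \matrix_(i, j) coef vars (nth [::] phi i) j.

Lemma lincomb_pp_relations (M : lmodType R^c) (s : nat -> M) (i : 'I_(size phi)) :
  lincomb s (nth [::] phi i) = \sum_j pp_relations i j *: s j.
Proof.
under eq_bigr => j _ do rewrite mxE.
have := lincomb_coef s (@phi_vars i); rewrite size_iota => <-.
by apply: eq_lincomb => p /phi_vars; rewrite mem_iota => /andP[_ /index_vars ->].
Qed.

Definition pp_relation_span (v : 'rV[R^c]_n) := exists u, v = u *m pp_relations.

Lemma pp_relation_span_submod : is_submod pp_relation_span.
Proof.
split.
- by exists 0; rewrite mul0mx.
- by move=> _ _ [u1 ->] [u2 ->]; exists (u1 - u2); rewrite mulmxBl.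
- by move=> a _ [u ->]; exists (a *: u); rewrite scalemxAl.
Qed.

Definition free_realization := quotmod pp_relation_span_submod.
Definition free_proj : {linear 'rV[R^c]_n -> free_realization} :=
  quotmod_proj pp_relation_span_submod.
Definition free_gen : free_realization := free_proj (delta_mx 0 ord0).

Lemma free_realization_fp : fin_presented free_realization.
Proof.
exists (size phi), n, (mulmxr pp_relations), free_proj; split.
- exact: quotmod_proj_surj.
- move=> v; rewrite quotmod_proj_eq0; split=> -[u ->]; by exists u.
Qed.

Lemma free_gen_sat : pp_sat phi free_gen.
Proof.
exists (fun j => free_proj (delta_mx 0 (inord j))); split.
  by congr (free_proj (delta_mx 0 _)); apply: val_inj; rewrite /= inordK.
move=> _ /(nthP [::])[i iphi <-]; rewrite (lincomb_pp_relations _ (Ordinal iphi)).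
have -> : \sum_j pp_relations (Ordinal iphi) j *: free_proj (delta_mx 0 (inord j)) =
    free_proj (row (Ordinal iphi) pp_relations).
  rewrite [row _ _]row_sum_delta linear_sum.
  by apply: eq_bigr => j _; rewrite linearZ !mxE inord_val.
by apply/quotmod_proj_eq0; exists (delta_mx 0 (Ordinal iphi)); rewrite rowE.
Qed.

Lemma free_realizationP (M : lmodType R^c) (m : M) :
  pp_sat phi m <-> exists h : {linear free_realization -> M}, h free_gen = m.
Proof.
split; last by case=> h <-; apply/pp_sat_linear/free_gen_sat.
case=> s [<- s_sol].
have L_lin : linear (fun v : 'rV_n => \sum_j v 0 j *: s j).
  move=> a u v; rewrite scaler_sumr -big_split; apply: eq_bigr => j _.
  by rewrite !mxE scalerDl scalerA.
have [|h hE] := @quotmod_proj_lift _ _ _ pp_relation_span_submod _ (linear_of L_lin).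
  move=> _ [u ->] /=; under eq_bigr => j _ do rewrite mxE scaler_suml.
  rewrite exchange_big big1 //= => i _; under eq_bigr => j _ do rewrite -scalerA.
  by rewrite -scaler_sumr -lincomb_pp_relations s_sol ?scaler0 ?mem_nth.
by exists h; rewrite hE /= sum_delta_scale.
Qed.

End FreeRealization.

Section DependentProduct.
Variables (K : pzRingType) (I : Type) (Mi : I -> lmodType K).

Definition depprod := forall i, Mi i.
HB.instance Definition _ := gen_eqMixin depprod.
HB.instance Definition _ := gen_choiceMixin depprod.

Let depprod_addA : associative (fun x y : depprod => fun i => x i + y i).
Proof. by move=> x y z; apply: functional_extensionality_dep => i; rewrite addrA. Qed.
Let depprod_addC : commutative (fun x y : depprod => fun i => x i + y i).
Proof. by move=> x y; apply: functional_extensionality_dep => i; rewrite addrC. Qed.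
Let depprod_add0 : left_id (fun i => 0 : Mi i) (fun x y : depprod => fun i => x i + y i).
Proof. by move=> x; apply: functional_extensionality_dep => i; rewrite add0r. Qed.
Let depprod_addN : left_inverse (fun i => 0 : Mi i) (fun (x : depprod) i => - x i)
  (fun x y : depprod => fun i => x i + y i).
Proof. by move=> x; apply: functional_extensionality_dep => i; rewrite addNr. Qed.
HB.instance Definition _ :=
  GRing.isZmodule.Build depprod depprod_addA depprod_addC depprod_add0 depprod_addN.

Let scale (a : K) (x : depprod) : depprod := fun i => a *: x i.
Let depprod_scaleA a b x : scale a (scale b x) = scale (a * b) x.
Proof. by apply: functional_extensionality_dep => i; rewrite /scale scalerA. Qed.
Let depprod_scale1 : left_id 1 scale.
Proof. by move=> x; apply: functional_extensionality_dep => i; rewrite /scale scale1r. Qed.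
Let depprod_scaleDr : right_distributive scale +%R.
Proof. by move=> a x y; apply: functional_extensionality_dep => i; rewrite /scale scalerDr. Qed.
Let depprod_scaleDl x : {morph scale^~ x : a b / a + b}.
Proof. by move=> a b; apply: functional_extensionality_dep => i; rewrite /scale scalerDl. Qed.
HB.instance Definition _ := GRing.Zmodule_isLmodule.Build K depprod
  depprod_scaleA depprod_scale1 depprod_scaleDr depprod_scaleDl.

Lemma depprodD (x y : depprod) i : (x + y) i = x i + y i. Proof. by []. Qed.
Lemma depprodN (x : depprod) i : (- x) i = - x i. Proof. by []. Qed.
Lemma depprodZ a (x : depprod) i : (a *: x) i = a *: x i. Proof. by []. Qed.

End DependentProduct.

Section DirectedPreorder.
Variables (I : Type) (le : I -> I -> Prop).
Hypothesis le_directed : directed le.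

Lemma directed_refl i : le i i. Proof. by case: le_directed => _ []. Qed.

Lemma directed_trans i j k : le i j -> le j k -> le i k.
Proof. by case: le_directed => _ [_ [trans _]]; apply: trans. Qed.

Lemma directed_ub2 i j : exists k, le i k /\ le j k.
Proof. by case: le_directed => _ [_ [_]]; apply. Qed.

Lemma directed_ub n (F : nat -> I) : exists k, forall q, (q < n)%N -> le (F q) k.
Proof.
elim: n => [|n [k Fk]]; first by case: le_directed => -[k _] _; exists k.
have [k' [kk' Fnk']] := directed_ub2 k (F n); exists k' => q; rewrite ltnS leq_eqVlt.
by case/orP=> [/eqP-> //|/Fk Fqk]; apply: directed_trans Fqk kk'.
Qed.

End DirectedPreorder.

Section DirectLimit.
Variables (R : nzRingType) (I : Type) (le : I -> I -> Prop) (Mi : I -> lmodType R^c).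
Variables (f : forall i j, le i j -> {linear Mi i -> Mi j}) (T : lmodType R^c).
Variable g : forall i, {linear Mi i -> T}.
Hypotheses (le_directed : directed le) (f_system : direct_system f).
Hypothesis g_limit : is_direct_limit f g.

Lemma direct_system_comp i j k (h1 : le i j) (h2 : le j k) (h3 : le i k) x :
  f h2 (f h1 x) = f h3 x.
Proof. by case: f_system => _; apply. Qed.

Lemma direct_system_irrelevance i j (h1 h2 : le i j) x : f h1 x = f h2 x.
Proof.
by rewrite -(direct_system_comp h1 (directed_refl le_directed j) h2); case: f_system => ->.
Qed.

Lemma direct_limit_cocone i j (h : le i j) x : g j (f h x) = g i x.
Proof. by case: g_limit => ->. Qed.

Lemma direct_limit_surj t : exists i (m : Mi i), g i m = t.
Proof.
pose S t := exists i (m : Mi i), g i m = t.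
have S_submod : is_submod S.
  split.
  - by case: le_directed => -[i _] _; exists i, 0; rewrite linear0.
  - move=> _ _ [i1 [m1 <-]] [i2 [m2 <-]]; have [k [h1 h2]] := directed_ub2 le_directed i1 i2.
    by exists k, (f h1 m1 - f h2 m2); rewrite linearB !direct_limit_cocone.
  - by move=> a _ [i [m <-]]; exists i, (a *: m); rewrite linearZ.
have [_ /(_ (quotmod_proj S_submod) \0) proj_uniq] :=
  g_limit.2 _ (fun i => \0 : {linear Mi i -> quotmod S_submod}) (fun _ _ _ _ => erefl).
apply/(quotmod_proj_eq0 S_submod); rewrite (proj_uniq _ _ t) // => i x.
by apply/quotmod_proj_eq0; exists i, x.
Qed.

Let germ i (m : Mi i) : depprod Mi :=
  fun j => if pselect (le i j) is left h then f h m else 0.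

Let germ_is_linear i : linear (@germ i).
Proof.
move=> a u v; apply: functional_extensionality_dep => j.
by rewrite depprodD depprodZ /germ; case: pselect => h; rewrite ?linearP // scaler0 addr0.
Qed.

Let eventually_zero (x : depprod Mi) := exists j0, forall j, le j0 j -> x j = 0.

Let eventually_zero_submod : is_submod eventually_zero.
Proof.
split.
- by case: le_directed => -[j0 _] _; exists j0.
- move=> x y [j1 x0] [j2 y0]; have [k [j1k j2k]] := directed_ub2 le_directed j1 j2.
  exists k => j kj; rewrite depprodD depprodN x0 ?y0 ?subrr //.
  + exact: directed_trans j2k kj.
  + exact: directed_trans j1k kj.
- by move=> a x [j0 x0]; exists j0 => j j0j; rewrite depprodZ x0 // scaler0.
Qed.

(* the germ of m at infinity, in the concrete colimit prod_j M_j / (eventually zero) *)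
Let germ_inf i : {linear Mi i -> quotmod eventually_zero_submod} :=
  quotmod_proj _ \o linear_of (@germ_is_linear i).

Let germ_inf_cocone i j (h : le i j) x : germ_inf j (f h x) = germ_inf i x.
Proof.
apply/eqP; rewrite -subr_eq0 /germ_inf /= -linearB; apply/eqP/quotmod_proj_eq0; exists j => k jk.
rewrite depprodD depprodN /germ; case: pselect => [h1|]; last by move/(_ jk).
case: pselect => [h2|]; last by move/(_ (directed_trans le_directed h jk)).
by rewrite (direct_system_comp h h1 h2) subrr.
Qed.

Lemma direct_limit_ker i (m : Mi i) : g i m = 0 -> exists j (h : le i j), f h m = 0.
Proof.
move=> gm0; have [[u uE] _] := g_limit.2 _ germ_inf germ_inf_cocone.
have /quotmod_proj_eq0[j0 mj0] : germ_inf i m = 0 by rewrite -uE gm0 linear0.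
have [k [ik j0k]] := directed_ub2 le_directed i j0; exists k, ik.
move: (mj0 k j0k) => /=; rewrite /germ; case: (pselect (le i k)) => [h|]; last by move/(_ ik).
by rewrite (direct_system_irrelevance h ik).
Qed.

Lemma direct_limit_lift_family n (s : nat -> T) :
  exists i (m : nat -> Mi i), forall q, (q < n)%N -> g i (m q) = s q.
Proof.
have /choice[P PE] q : exists p : {i : I & Mi i}, g (tag p) (tagged p) = s q.
  by have [i [m gm]] := direct_limit_surj (s q); exists (Tagged Mi m).
have [k Pk] := directed_ub le_directed n (fun q => tag (P q)).
exists k, (fun q => if pselect (le (tag (P q)) k) is left h then f h (tagged (P q)) else 0).
move=> q qn; case: pselect => [h|]; last by move/(_ (Pk q qn)).
by rewrite direct_limit_cocone PE.
Qed.

Lemma direct_limit_ker_family i n (x : nat -> Mi i) :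
  (forall q, (q < n)%N -> g i (x q) = 0) ->
  exists j (h : le i j), forall q, (q < n)%N -> f h (x q) = 0.
Proof.
move=> gx0.
have /choice[J JP] q : exists j, le i j /\ ((q < n)%N -> forall h : le i j, f h (x q) = 0).
  have [qn|_] := ltnP q n; last by exists i; split=> //; apply: directed_refl.
  have [j [h fx0]] := direct_limit_ker (gx0 q qn).
  by exists j; split=> // _ h'; rewrite (direct_system_irrelevance h' h).
have [k Jk] := directed_ub le_directed n J.
have [k' [ik' kk']] := directed_ub2 le_directed i k.
exists k', ik' => q qn; have [iJ Jkill] := JP q.
have Jk' := directed_trans le_directed (Jk q qn) kk'.
by rewrite -(direct_system_comp iJ Jk' ik') Jkill // linear0.
Qed.

Lemma direct_limit_pp_sat (phi : ppformula R^c) t :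
  pp_sat phi t -> exists i (m : Mi i), pp_sat phi m /\ g i m = t.
Proof.
case=> s [<- s_sol]; have [i [m mE]] := direct_limit_lift_family (pp_nvars phi) s.
pose rel q := lincomb m (nth [::] phi q).
have [|j [h rel0]] := @direct_limit_ker_family i (size phi) rel => [q qphi|].
  rewrite linear_lincomb -[RHS](s_sol (nth [::] phi q) (mem_nth [::] qphi)).
  apply: eq_lincomb => p pe.
  by apply/mE/pp_nvarsP/pe/mem_nth.
exists j, (f h (m 0%N)); split.
  exists (f h \o m); split=> // _ /(nthP [::])[q qphi <-].
  by rewrite -linear_lincomb rel0.
by rewrite direct_limit_cocone mE.
Qed.

End DirectLimit.

Section Chain.
Variables (R : nzRingType) (Cs : nat -> lmodType R^c) (step : forall n, {linear Cs n -> Cs n.+1}).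

Fixpoint chain_iter n d : {linear Cs n -> Cs (d + n)%N} :=
  if d is d'.+1 then step (d' + n) \o chain_iter n d' : {linear Cs n -> Cs (d' + n).+1}
  else idfun.

Definition chain n m (h : (n <= m)%N) : {linear Cs n -> Cs m} :=
  eq_rect _ (fun k => {linear Cs n -> Cs k}) (chain_iter n (m - n)) m (subnK h).

Lemma chainE n d (h : (n <= d + n)%N) x : chain h x = chain_iter n d x.
Proof.
rewrite /chain; move: (subnK h); have := addnK n d.
move: (d + n - n)%N => d' d'E; subst d' => E.
by rewrite (eq_irrelevance E erefl).
Qed.

Lemma chain_id n (h : (n <= n)%N) x : chain h x = x.
Proof. exact: (chainE (d := 0) h x). Qed.

Lemma chainS n m (h : (n <= m.+1)%N) (h' : (n <= m)%N) x : chain h x = step m (chain h' x).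
Proof.
have [d mE] : exists d, m = (d + n)%N by exists (m - n)%N; rewrite subnK.
by subst m; rewrite (chainE (d := d.+1) h) (chainE h').
Qed.

Lemma chain_direct_system : direct_system chain.
Proof.
split=> [|i j k h1 h2 h3 x]; first exact: chain_id.
elim: k h2 h3 => [|k IH] h2 h3.
  have j0 : j = 0%N by apply/eqP; rewrite -leqn0.
  by subst j; rewrite chain_id (eq_irrelevance h1 h3).
case: (ltngtP j k.+1) => [jk|kj|jk].
- rewrite ltnS in jk; have ik := leq_trans h1 jk.
  by rewrite (chainS h2 jk) (chainS h3 ik) (IH jk ik).
- by exfalso; move: h2; rewrite leqNgt kj.
- by subst j; rewrite chain_id (eq_irrelevance h1 h3).
Qed.

End Chain.

Section MittagLefflerDCC.
Variables (R : nzRingType) (C : lmodType R^c -> Prop) (T : lmodType R^c).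
Hypotheses (C_cov : cov_finite_in_fp C) (T_lim : in_varinjlim C T).

Definition preenvelope (F C0 : lmodType R^c) (p : {linear F -> C0}) :=
  C C0 /\ forall (C1 : lmodType R^c) (k : {linear F -> C1}), C C1 ->
    exists t : {linear C0 -> C1}, forall x, t (p x) = k x.

Lemma preenvelope_exists (phi : ppformula R^c) :
  exists P : {C0 : lmodType R^c & {linear free_realization phi -> C0}}, preenvelope (tagged P).
Proof.
have [C0 [p p_pre]] := C_cov.2 _ (free_realization_fp phi).
by exists (Tagged (fun C1 : lmodType R^c => {linear free_realization phi -> C1}) p).
Qed.

Lemma pp_sat_preenvelope phi (C0 : lmodType R^c) (p : {linear free_realization phi -> C0}) t :
  preenvelope p -> pp_sat phi t <-> exists h : {linear C0 -> T}, h (p (free_gen phi)) = t.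
Proof.
case=> _ p_univ; split; last first.
  by case=> h <-; apply: (pp_sat_linear (h \o p)); apply: free_gen_sat.
case: T_lim => I [le [Mi [f [g [le_directed [MiC [f_system g_limit]]]]]]].
case/(direct_limit_pp_sat le_directed f_system g_limit) => i [m [phim <-]].
have [h <-] := proj1 (free_realizationP phi m) phim.
by have [u uE] := p_univ _ h (MiC i); exists (g i \o u); rewrite /= uE.
Qed.

Lemma preenvelope_chain (psi : nat -> ppformula R^c) :
  (forall n (N : lmodType R^c) (x : N), pp_sat (psi n.+1) x -> pp_sat (psi n) x) ->
  exists (Cs : nat -> lmodType R^c) (step : forall n, {linear Cs n -> Cs n.+1})
         (e : forall n, Cs n),
    [/\ forall n, C (Cs n), forall n, step n (e n) = e n.+1 &
        forall n t, pp_sat (psi n) t <-> exists h : {linear Cs n -> T}, h (e n) = t].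
Proof.
move=> psi_desc; have [P P_pre] := all_sig (fun n => cid (preenvelope_exists (psi n))).
pose e n := tagged (P n) (free_gen (psi n)).
have stepP n : exists t : {linear tag (P n) -> tag (P n.+1)}, t (e n) = e n.+1.
  have [a aE] : exists a : {linear free_realization (psi n) -> free_realization (psi n.+1)},
      a (free_gen _) = free_gen _.
    exact/free_realizationP/psi_desc/free_gen_sat.
  have [t tE] := (P_pre n).2 _ (tagged (P n.+1) \o a) (P_pre n.+1).1.
  by exists t; rewrite /e tE /= aE.
have [step stepE] := all_sig (fun n => cid (stepP n)).
exists (fun n => tag (P n)), step, e; split=> // [n|n t]; first exact: (P_pre n).1.
exact: pp_sat_preenvelope.
Qed.

Theorem hom_ML_pp_dcc :
  (forall (Cs : nat -> lmodType R^c) (c : forall n m, (n <= m)%N -> {linear Cs n -> Cs m}),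
     (forall n, C (Cs n)) -> direct_system c -> hom_ML c T) ->
  pp_dcc T.
Proof.
move=> ML D D_desc.
(* a chain descending in every module, with the same pp-sets as D in T *)
pose psi := fix psi n := if n is n'.+1 then pp_and (psi n') (D n) else D 0%N.
have psiT n (t : T) : pp_sat (psi n) t <-> pp_sat (D n) t.
  elim: n t => // n IH t /=; rewrite pp_andP IH.
  by split=> [[]|Dt] //; split=> //; apply: D_desc.
have psi_desc n (N : lmodType R^c) (x : N) : pp_sat (psi n.+1) x -> pp_sat (psi n) x.
  by case/pp_andP.
have [Cs [step [e [CsC stepE psiCs]]]] := preenvelope_chain psi_desc.
have chain_e n (h : (0 <= n)%N) : chain step h (e 0%N) = e n.
  elim: n h => [|n IH] h; first by rewrite chain_id.
  by rewrite (chainS step h (leq0n n)) IH stepE.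
have [m [h0m MLm]] := ML Cs (chain step) CsC (chain_direct_system step) 0%N.
exists m => t /psiT/psiCs[phi <-]; apply/psiT/psiCs.
have [|phi' phi'E] := (MLm m.+1 (leq0n _) (leqnSn m) (phi \o chain step h0m)).2.
  by exists phi.
by exists phi'; rewrite -(chain_e _ (leq0n _)) -phi'E /= chain_e.
Qed.

End MittagLefflerDCC.

Unset Implicit Arguments.
Set Strict Implicit.

Theorem lemma5p8 (R : nzRingType) (C : lmodType R^c -> Prop) (T : lmodType R^c) :
  cov_finite_in_fp C ->
  in_varinjlim C T ->
  (forall (Cs : nat -> lmodType R^c)
          (c : forall n m, (n <= m)%N -> {linear Cs n -> Cs m}),
     (forall n, C (Cs n)) ->
     direct_system c ->
     hom_ML c T) ->
  sigma_pure_injective T.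
Proof.
move=> C_cov T_lim ML M TM.
apply: pp_dcc_pure_injective; apply: (pp_dcc_direct_sum TM).
exact: hom_ML_pp_dcc C_cov T_lim ML.
Qed.
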